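(* Let $0<m<L$, $\alpha>0$, and set $\kappa = L/m$. Suppose that $\delta \in \left[0, \tfrac{2}{\kappa+1}\right)$ and $\rho \geq \rho_\mathrm{GD}(\delta) := \max\big(1-(1-\delta)\alpha m,\ (1+\delta)\alpha L -1\big)$. If \[ \alpha \leq \frac{1}{1-\delta}\left( \frac{2}{L+m} - \frac{\delta}{m} \right) \quad\text{or}\quad \alpha \geq \frac{1}{1+\delta}\left( \frac{2}{L+m} + \frac{\delta}{L} \right), \] then there exists $c>0$ such that for every $f \in \mathcal{S}(m,L)$ (with reference point $x_\star$), every sequence $x(k)\in\mathbb{R}^n$ and every error sequence $e(k)\in\mathbb{R}^n$ satisfying, for all $k\ge 0$, \[ x(k+1) = x(k) - \alpha\big(\nabla f(x(k)) + e(k)\big), \qquad |e(k)| \leq \delta\, |\nabla f(x(k))|, \] we have $|x(k)-x_\star| \leq c\, \rho^k\, |x(0)-x_\star|$ for all $k \geq 0$.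
   Context: For $0\le m<L$, $\mathcal{S}(m,L)$ denotes the set of $C^1$ functions $f:\mathbb{R}^n\to\mathbb{R}$ for which there is a reference point $x_\star\in\mathbb{R}^n$ such that for every $x\in\mathbb{R}^n$, $\langle m(x-x_\star) - \nabla f(x),\ L(x-x_\star) - \nabla f(x)\rangle \le 0$ (gradients bounded in the sector $[m,L]$ about $x_\star$). The constant $c$ may depend on $m,L,\alpha,\delta,\rho$ but not on $f$, $x$ or $e$. *)

From HB Require Import structures.
From mathcomp Require Import all_boot all_order all_algebra.
From mathcomp Require Import all_classical all_reals all_analysis.
Set Implicit Arguments. Unset Strict Implicit. Unset Printing Implicit Defensive.
Import Order.TTheory GRing.Theory Num.Theory.
Import numFieldNormedType.Exports.
Local Open Scope ring_scope.

(* Euclidean inner product and Euclidean norm on R^n (the library's norm on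
   matrices is the sup norm, so we define the Euclidean one explicitly). *)
Definition dotv {R : realType} {n : nat} (u v : 'rV[R]_n) : R :=
  \sum_(i < n) u ord0 i * v ord0 i.

Definition enorm {R : realType} {n : nat} (u : 'rV[R]_n) : R :=
  Num.sqrt (dotv u u).

Definition C1_with_gradient {R : realType} {n : nat}
    (f : 'rV[R]_n -> R) (g : 'rV[R]_n -> 'rV[R]_n) : Prop :=
  (forall x, differentiable f x) /\
  (forall x v, 'D_v f x = dotv (g x) v) /\
  continuous g.

Definition in_sector_class {R : realType} {n : nat} (m L : R)
    (f : 'rV[R]_n -> R) (g : 'rV[R]_n -> 'rV[R]_n) (xs : 'rV[R]_n) : Prop :=
  C1_with_gradient f g /\
  forall x, dotv (m *: (x - xs) - g x) (L *: (x - xs) - g x) <= 0.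

Definition rho_GD {R : realType} (m L alpha delta : R) : R :=
  Num.max (1 - (1 - delta) * alpha * m) ((1 + delta) * alpha * L - 1).

(* One step of the perturbed iteration already contracts the distance to x_star
   by the factor rho, so c = 1 works.  For y = x - x_star and G = grad f x, the
   sector condition gives <y, G> >= (|G|^2 + m L |y|^2) / (L + m) and, with
   Cauchy-Schwarz, m |y| <= |G| <= L |y|; hence |y - alpha G|^2 <= Q(|y|, |G|)
   for an explicit quadratic Q.  The error moves the iterate by at most
   alpha delta |G|, so it suffices that Q(N, t) <= (rho N - alpha delta t)^2 for
   t in [m N, L N].  Under either step-size condition the difference of the two
   sides factors into two terms that are nonnegative on this interval, one of
   them vanishing at t = m N (small alpha, rho >= 1 - (1 - delta) alpha m) or at
   t = L N (large alpha, rho >= (1 + delta) alpha L - 1). *)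

From HB Require Import structures.
From mathcomp Require Import all_boot all_order all_algebra.
From mathcomp Require Import all_classical all_reals all_analysis.
From mathcomp Require Import ring lra.
Import Order.TTheory GRing.Theory Num.Theory.
Import numFieldNormedType.Exports.
Local Open Scope ring_scope.

Section EuclideanNorm.
Context {R : realType} {n : nat}.
Implicit Types (u v w : 'rV[R]_n).

Lemma dotvC u v : dotv u v = dotv v u.
Proof. by apply: eq_bigr => i _; rewrite mulrC. Qed.

Lemma dotvDl u w v : dotv (u + w) v = dotv u v + dotv w v.
Proof. by rewrite /dotv -big_split; apply: eq_bigr => i _; rewrite !mxE mulrDl. Qed.

Lemma dotvZl (a : R) u v : dotv (a *: u) v = a * dotv u v.
Proof. by rewrite /dotv mulr_sumr; apply: eq_bigr => i _; rewrite !mxE mulrA. Qed.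

Lemma dotvNl u v : dotv (- u) v = - dotv u v.
Proof. by rewrite -scaleN1r dotvZl mulN1r. Qed.

Lemma dotvDr u w v : dotv v (u + w) = dotv v u + dotv v w.
Proof. by rewrite dotvC dotvDl !(dotvC v). Qed.

Lemma dotvNr u v : dotv v (- u) = - dotv v u.
Proof. by rewrite dotvC dotvNl dotvC. Qed.

Lemma dotvZr (a : R) u v : dotv v (a *: u) = a * dotv v u.
Proof. by rewrite dotvC dotvZl dotvC. Qed.

Definition dotvE := (dotvDl, dotvDr, dotvNl, dotvNr, dotvZl, dotvZr).

Lemma dotvv_ge0 u : 0 <= dotv u u.
Proof. by apply: sumr_ge0 => i _; rewrite -expr2 sqr_ge0. Qed.

Lemma dotvv_eq0 u : (dotv u u == 0) = (u == 0).
Proof.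
apply/eqP/eqP => [uu0|->]; last by rewrite /dotv big1 // => i _; rewrite mxE mul0r.
apply/rowP => i; apply/eqP; rewrite mxE -sqrf_eq0 expr2.
by apply/eqP; apply: (psumr_eq0P _ uu0) => // j _; rewrite -expr2 sqr_ge0.
Qed.

Lemma enorm_ge0 u : 0 <= enorm u.
Proof. exact: sqrtr_ge0. Qed.

Lemma sqr_enorm u : enorm u ^+ 2 = dotv u u.
Proof. by rewrite sqr_sqrtr // dotvv_ge0. Qed.

Lemma enorm_le_sqr u (b : R) : 0 <= b -> dotv u u <= b ^+ 2 -> enorm u <= b.
Proof. by move=> b0 ub; rewrite -(ger0_norm b0) -sqrtr_sqr ler_wsqrtr. Qed.

Lemma enormZ (a : R) u : enorm (a *: u) = `|a| * enorm u.
Proof. by rewrite /enorm dotvZl dotvZr mulrA -expr2 sqrtrM ?sqr_ge0 // sqrtr_sqr. Qed.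

Lemma cauchy_schwarz u v : dotv u v <= enorm u * enorm v.
Proof.
have [->|u0] := eqVneq u 0.
  by rewrite /dotv big1 ?mulr_ge0 ?enorm_ge0 // => i _; rewrite mxE mul0r.
have uu0 : 0 < dotv u u by rewrite lt0r dotvv_eq0 u0 dotvv_ge0.
have [uv0|uv0] := lerP (dotv u v) 0.
  by apply: le_trans uv0 _; rewrite mulr_ge0 ?enorm_ge0.
rewrite -ler_sqr ?nnegrE ?mulr_ge0 ?enorm_ge0 ?(ltW uv0) // exprMn !sqr_enorm.
(* 0 <= |<u,u> v - <u,v> u|^2 = <u,u> (<u,u><v,v> - <u,v>^2) *)
have := dotvv_ge0 (dotv u u *: v - dotv u v *: u).
rewrite !dotvE (dotvC v u); nra.
Qed.

Lemma ler_enormD u v : enorm (u + v) <= enorm u + enorm v.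
Proof.
apply: enorm_le_sqr; first by rewrite addr_ge0 ?enorm_ge0.
rewrite !dotvE (dotvC v u) sqrrD !sqr_enorm.
by have := cauchy_schwarz u v; lra.
Qed.

End EuclideanNorm.

Section ScalarBounds.
Context {R : realType}.

Definition stepsize_condition (m L a d : R) : Prop :=
  a * (1 - d) * m * (L + m) <= 2 * m - d * (L + m) \/
  2 * L + d * (L + m) <= a * (1 + d) * L * (L + m).

Lemma rho_GD_ge0 (m L a d : R) :
  0 <= m -> m <= L -> 0 <= a -> 0 <= d -> 0 <= rho_GD m L a d.
Proof.
move=> m0 mL a0 d0; rewrite /rho_GD le_max.
have sum0 : 0 <= a * (L - m) + a * d * (L + m).
  by rewrite addr_ge0 ?mulr_ge0 ?subr_ge0 //; lra.
by case: lerP => //= neg; lra.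
Qed.

Lemma stepsize_condition_of_div {m L a d : R} :
  0 < m -> m < L -> 0 <= d -> d < 1 ->
  (a <= (1 - d)^-1 * (2 / (L + m) - d / m) \/
   (1 + d)^-1 * (2 / (L + m) + d / L) <= a) ->
  stepsize_condition m L a d.
Proof.
move=> m0 mL d0 d1 [short|long]; [left|right]; [move: short | move: long].
- have -> : (1 - d)^-1 * (2 / (L + m) - d / m) =
            (2 * m - d * (L + m)) / ((1 - d) * m * (L + m)).
    by field; rewrite !gt_eqF ?subr_gt0 //; lra.
  by rewrite ler_pdivlMr ?mulrA // !mulr_gt0 // ?subr_gt0; lra.
- have -> : (1 + d)^-1 * (2 / (L + m) + d / L) =
            (2 * L + d * (L + m)) / ((1 + d) * L * (L + m)).
    by field; rewrite !gt_eqF //; lra.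
  by rewrite ler_pdivrMr ?mulrA // !mulr_gt0 //; lra.
Qed.

(* Upper bound for |y - a G|^2 under the sector condition, in terms of N = |y| and t = |G|. *)
Definition sector_step_bound (m L a N t : R) : R :=
  N ^+ 2 - 2 * a * (t ^+ 2 + m * L * N ^+ 2) / (L + m) + a ^+ 2 * t ^+ 2.

Lemma sector_step_bound_short (m L a d N t : R) :
  0 < m -> m < L -> 0 < a -> 0 <= d -> d < 1 ->
  a * (1 - d) * m * (L + m) <= 2 * m - d * (L + m) ->
  0 <= N -> m * N <= t <= L * N ->
  0 <= (1 - (1 - d) * a * m) * N - a * d * t /\
  sector_step_bound m L a N t <= ((1 - (1 - d) * a * m) * N - a * d * t) ^+ 2.
Proof.
move=> m0 mL a0 d0 d1 short N0 /andP[tm tL].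
have S0 : 0 < L + m by lra.
have aS : a * (L + m) <= 2.
  rewrite -subr_le0 -(@pmulr_rle0 _ ((1 - d) * m)); last by apply: mulr_gt0; lra.
  nra.
have coef : 0 <= 1 - (1 - d) * a * m - a * d * L.
  rewrite -(pmulr_rge0 _ S0).
  have : d * L * (a * (L + m)) <= d * L * 2 by rewrite ler_wpM2l ?mulr_ge0 //; lra.
  have : 0 <= (1 - d) * (L - m) by apply: mulr_ge0; lra.
  lra.
split.
  have : a * d * t <= a * d * (L * N) by rewrite ler_wpM2l ?mulr_ge0 //; lra.
  have := mulr_ge0 N0 coef; lra.
(* Both sides agree at t = m N, hence the factor t - m N. *)
rewrite -subr_ge0 -(pmulr_rge0 _ S0).
have -> : (L + m) * (((1 - (1 - d) * a * m) * N - a * d * t) ^+ 2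
                     - sector_step_bound m L a N t) =
  (t - m * N) * (2 * a * (2 * m - d * (L + m) - a * (1 - d) * m * (L + m)) * N
                 + a * (2 - a * (1 - d ^+ 2) * (L + m)) * (t - m * N)).
  by rewrite /sector_step_bound; field; rewrite gt_eqF.
apply: mulr_ge0; first lra.
apply: addr_ge0; apply: mulr_ge0; try lra.
- by apply: mulr_ge0; lra.
- apply: mulr_ge0; first lra.
  have : 0 <= d ^+ 2 * (a * (L + m)) by rewrite mulr_ge0 ?sqr_ge0 ?mulr_ge0 //; lra.
  lra.
Qed.

Lemma sector_step_bound_long (m L a d N t : R) :
  0 < m -> m < L -> 0 < a -> 0 <= d ->
  2 * L + d * (L + m) <= a * (1 + d) * L * (L + m) ->
  0 <= N -> m * N <= t <= L * N ->
  0 <= ((1 + d) * a * L - 1) * N - a * d * t /\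
  sector_step_bound m L a N t <= (((1 + d) * a * L - 1) * N - a * d * t) ^+ 2.
Proof.
move=> m0 mL a0 d0 long N0 /andP[tm tL].
have S0 : 0 < L + m by lra.
have aL : 1 <= a * L.
  rewrite -subr_ge0 -(@pmulr_rge0 _ ((1 + d) * (L + m))); last by apply: mulr_gt0; lra.
  lra.
split.
  have : a * d * t <= a * d * (L * N) by rewrite ler_wpM2l ?mulr_ge0 //; lra.
  have : 0 <= (a * L - 1) * N by rewrite mulr_ge0 // subr_ge0.
  lra.
set P := 2 * a * (a * (1 + d) * L * (L + m) - 2 * L - d * (L + m)).
set A := a * (2 - a * (1 - d ^+ 2) * (L + m)).
have P0 : 0 <= P by apply: mulr_ge0; lra.
have PA0 : 0 <= P + A * (L - m).
  have -> : P + A * (L - m) =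
    (L + m) * a * (1 + d) * (a * (L + m) + a * d * (L - m) - 2) by rewrite /P /A; ring.
  rewrite mulr_ge0 ?mulr_ge0 //; try lra.
  rewrite -(@pmulr_rge0 _ (L * (1 + d) * (L + m))) ?mulr_gt0 //; try lra.
  have -> : L * (1 + d) * (L + m) * (a * (L + m) + a * d * (L - m) - 2) =
    (a * (1 + d) * L * (L + m) - 2 * L - d * (L + m)) * (L + m + d * (L - m))
    + d * (L - m) ^+ 2 + d ^+ 2 * (L ^+ 2 - m ^+ 2) by ring.
  rewrite -addrA; apply: addr_ge0; last apply: addr_ge0.
  - by apply: mulr_ge0; [lra | apply: addr_ge0; [lra | apply: mulr_ge0; lra]].
  - by rewrite mulr_ge0 ?sqr_ge0.
  - by rewrite mulr_ge0 ?sqr_ge0 //; nra.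
(* This factor is affine in t, nonnegative at t = L N by P0 and at t = m N by PA0. *)
have factor0 : 0 <= P * N + A * (L * N - t).
  rewrite -(@pmulr_rge0 _ (L - m)) ?subr_gt0 //.
  have -> : (L - m) * (P * N + A * (L * N - t)) =
    (t - m * N) * P + (L * N - t) * (P + A * (L - m)) by ring.
  apply: addr_ge0; apply: mulr_ge0; lra.
(* Both sides agree at t = L N, hence the factor L N - t. *)
rewrite -subr_ge0 -(pmulr_rge0 _ S0).
have -> : (L + m) * ((((1 + d) * a * L - 1) * N - a * d * t) ^+ 2
                     - sector_step_bound m L a N t) =
  (L * N - t) * (P * N + A * (L * N - t)).
  by rewrite /sector_step_bound /P /A; field; rewrite gt_eqF.
apply: mulr_ge0; lra.
Qed.

Lemma sector_step_bound_le {m L a d rho N t : R} :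
  0 < m -> m < L -> 0 < a -> 0 <= d -> d < 1 ->
  rho_GD m L a d <= rho ->
  stepsize_condition m L a d ->
  0 <= N -> m * N <= t <= L * N ->
  0 <= rho * N - a * d * t /\ sector_step_bound m L a N t <= (rho * N - a * d * t) ^+ 2.
Proof.
move=> m0 mL a0 d0 d1; rewrite /rho_GD ge_max => /andP[short_rho long_rho] step N0 tmL.
suff [r [r_rho [r0 Q_le]]] : exists r, r <= rho /\
    0 <= r * N - a * d * t /\ sector_step_bound m L a N t <= (r * N - a * d * t) ^+ 2.
  have rN : r * N <= rho * N by rewrite ler_wpM2r.
  split; first lra.
  by apply: le_trans Q_le _; rewrite ler_sqr ?nnegrE; lra.
case: step => [short|long].
- by exists (1 - (1 - d) * a * m); split; last exact: sector_step_bound_short.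
- by exists ((1 + d) * a * L - 1); split; last exact: sector_step_bound_long.
Qed.

End ScalarBounds.

Section SectorClass.
Context {R : realType} {n : nat}.
Implicit Types (y G E : 'rV[R]_n).

Lemma sector_dotv_ge (m L : R) y G :
  dotv (m *: y - G) (L *: y - G) <= 0 ->
  enorm G ^+ 2 + m * L * enorm y ^+ 2 <= (L + m) * dotv y G.
Proof. by rewrite !dotvE !sqr_enorm (dotvC G y); lra. Qed.

Lemma sector_enorm_bounds (m L : R) y G :
  0 <= m -> m <= L -> dotv (m *: y - G) (L *: y - G) <= 0 ->
  m * enorm y <= enorm G <= L * enorm y.
Proof.
move=> m0 mL /sector_dotv_ge.
move: (enorm_ge0 y) (enorm_ge0 G) (cauchy_schwarz y G).
move: (enorm y) (enorm G) (dotv y G) => N t c N0 t0 cs sector.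
have mNL : m * N <= L * N by rewrite ler_wpM2r.
have cs' : (L + m) * c <= (L + m) * (N * t) by rewrite ler_wpM2l //; lra.
have prod : (t - m * N) * (t - L * N) <= 0 by lra.
by apply/andP; split; rewrite leNgt; apply/negP => lt; nra.
Qed.

Lemma sector_gradient_step (m L a : R) y G :
  0 < L + m -> 0 <= a -> dotv (m *: y - G) (L *: y - G) <= 0 ->
  dotv (y - a *: G) (y - a *: G) <= sector_step_bound m L a (enorm y) (enorm G).
Proof.
move=> S0 a0 /sector_dotv_ge sector.
rewrite -subr_ge0.
have -> : sector_step_bound m L a (enorm y) (enorm G) - dotv (y - a *: G) (y - a *: G)
    = 2 * a / (L + m) * ((L + m) * dotv y G - enorm G ^+ 2 - m * L * enorm y ^+ 2).
  by rewrite /sector_step_bound !dotvE -!sqr_enorm (dotvC G y); field; rewrite gt_eqF.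
by rewrite mulr_ge0 ?divr_ge0 ?mulr_ge0 //; lra.
Qed.

Lemma sector_perturbed_step {m L a d rho : R} {y G E : 'rV[R]_n} :
  0 < m -> m < L -> 0 < a -> 0 <= d -> d < 1 ->
  rho_GD m L a d <= rho ->
  stepsize_condition m L a d ->
  dotv (m *: y - G) (L *: y - G) <= 0 ->
  enorm E <= d * enorm G ->
  enorm (y - a *: (G + E)) <= rho * enorm y.
Proof.
move=> m0 mL a0 d0 d1 rho_ge step sector err.
have tmL : m * enorm y <= enorm G <= L * enorm y.
  by apply: sector_enorm_bounds => //; apply: ltW.
have [r0 Q_le] := sector_step_bound_le m0 mL a0 d0 d1 rho_ge step (enorm_ge0 y) tmL.
have exact_step : enorm (y - a *: G) <= rho * enorm y - a * d * enorm G.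
  apply: enorm_le_sqr => //; apply: le_trans Q_le.
  by apply: sector_gradient_step => //; lra.
have -> : y - a *: (G + E) = (y - a *: G) + (- a) *: E.
  by rewrite scalerDr opprD addrA scaleNr.
apply: le_trans (ler_enormD _ _) _; rewrite enormZ normrN gtr0_norm //.
have : a * enorm E <= a * (d * enorm G) by rewrite ler_wpM2l // ltW.
lra.
Qed.

End SectorClass.

Theorem proposition1p1 (R : realType) (m L alpha delta rho : R) :
  0 < m -> m < L -> 0 < alpha ->
  0 <= delta -> delta < 2 / (L / m + 1) ->
  rho_GD m L alpha delta <= rho ->
  (alpha <= (1 - delta)^-1 * (2 / (L + m) - delta / m) \/
   (1 + delta)^-1 * (2 / (L + m) + delta / L) <= alpha) ->
  exists c : R, 0 < c /\
    forall (n : nat) (f : 'rV[R]_n -> R) (g : 'rV[R]_n -> 'rV[R]_n)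
           (xs : 'rV[R]_n) (x e : nat -> 'rV[R]_n),
      in_sector_class m L f g xs ->
      (forall k, x k.+1 = x k - alpha *: (g (x k) + e k)) ->
      (forall k, enorm (e k) <= delta * enorm (g (x k))) ->
      forall k, enorm (x k - xs) <= c * rho ^+ k * enorm (x 0%N - xs).
Proof.
move=> m0 mL a0 d0 d_lt rho_ge cond.
have d1 : delta < 1.
  apply: lt_le_trans d_lt _; rewrite ler_pdivrMr ?mul1r; last by rewrite addr_gt0 ?divr_gt0 //; lra.
  by rewrite -lerBlDr ler_pdivlMr //; lra.
have rho0 : 0 <= rho by apply: le_trans rho_ge; rewrite rho_GD_ge0 //; lra.
have step := stepsize_condition_of_div m0 mL d0 d1 cond.
exists 1; split=> // n f g xs x e [_ sector] xS eb; elim=> [|k IH].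
  by rewrite expr0 !mul1r.
have -> : x k.+1 - xs = (x k - xs) - alpha *: (g (x k) + e k) by rewrite xS addrAC.
apply: le_trans (sector_perturbed_step m0 mL a0 d0 d1 rho_ge step (sector (x k)) (eb k)) _.
by rewrite mul1r exprS -mulrA ler_wpM2l // -(mul1r (rho ^+ k)).
Qed.
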